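(* Let $(X,d)$ be $\delta$-hyperbolic with base point $o$, let $\mathcal S$ be a $(1/100,C_0,D)$-Schottky set, and consider the pivotal-time construction below. If $P_n=\{k_1<\dots<k_p\}$ and $D\ge 6C_0+13\delta+1$, then for every $i=2,\dots,p$ the sequence $y^-_{k_i},\,y_{k_i},\,y^-_{n+1}$ is a $(2C_0+5\delta,\ D-6C_0-13\delta)$-chain.
   Context: Gromov product $(x|y)_z=\frac12(d(x,z)+d(z,y)-d(x,y))$. A sequence $x_0,\dots,x_n$ is a $(C,D)$-chain if $(x_{i-1}|x_{i+1})_{x_i}\le C$ for $1\le i\le n-1$ and $d(x_{i-1},x_i)\ge D$ for $1\le i\le n$. For $C\ge0$, $D'=2C+2\delta+1$, the chain shadow $\mathcal{CS}_x(y,C)$ is the set of $z$ for which there is a $(C,D')$-chain $x_0=x,x_1,\dots,x_n=z$ with $(x_0|x_1)_y\le C$. A finite set $\mathcal S$ of isometries is an $(\epsilon,C,D)$-Schottky set if for all $x,y\in X$: $\#\{s:(x|s y)_o\le C\}\ge(1-\epsilon)\#\mathcal S$, $\#\{s:(x|s^{-1}y)_o\le C\}\ge(1-\epsilon)\#\mathcal S$, and $d(o,so)\ge D$ for all $s\in\mathcal S$. Construction: fix isometries $u_0,u_1,\dots$ and elements $s_i=a_ib_i$ with $a_i,b_i\in\mathcal S$. Put $y_n^-=u_0s_1u_1\cdots s_{n-1}u_{n-1}o$, $y_n=u_0s_1u_1\cdots s_{n-1}u_{n-1}a_no$, $y_n^+=u_0s_1u_1\cdots s_{n-1}u_{n-1}a_nb_no$.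 Pivotal times: $P_0=\emptyset$; given $P_{n-1}$ let $k=\max P_{n-1}$ (and $k=0$, $y_0:=o$ if $P_{n-1}=\emptyset$). If the local geodesic condition $(y_k|y_n)_{y_n^-}\le C_0$, $(y_n^-|y_n^+)_{y_n}\le C_0$, $(y_n|y_{n+1}^-)_{y_n^+}\le C_0$ holds, set $P_n=P_{n-1}\cup\{n\}$; otherwise let $m$ be the largest element of $P_{n-1}$ with $y^-_{n+1}\in\mathcal{CS}_{y_m}(y_m^+,C_0+\delta)$ and set $P_n=P_{n-1}\cap\{1,\dots,m\}$ ($P_n=\emptyset$ if no such $m$). *)

From HB Require Import structures.
From mathcomp Require Import all_boot all_order all_algebra.
From mathcomp Require Import boolp reals.
Set Implicit Arguments. Unset Strict Implicit. Unset Printing Implicit Defensive.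
Import Order.TTheory GRing.Theory Num.Theory.
Local Open Scope ring_scope.

Definition gp (R : realType) (X : Type) (d : X -> X -> R) (x y z : X) : R :=
  (d x z + d z y - d x y) / 2.

Definition metric (R : realType) (X : Type) (d : X -> X -> R) : Prop :=
  [/\ (forall x, d x x = 0),
      (forall x y, d x y = d y x),
      (forall x y z, d x z <= d x y + d y z)
    & (forall x y, d x y = 0 -> x = y)].

Definition hyperbolic (R : realType) (X : Type) (d : X -> X -> R) (delta : R)
  : Prop :=
  0 <= delta /\
  forall x y z w, Num.min (gp d x y w) (gp d y z w) - delta <= gp d x z w.

Definition is_isom (R : realType) (X : Type) (d : X -> X -> R) (f : X -> X)
  : Prop :=
  (forall x y, d (f x) (f y) = d x y) /\ bijective f.

Definition is_chain (R : realType) (X : Type) (d : X -> X -> R) (C D : R)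
  (c : nat -> X) (m : nat) : Prop :=
  (forall i, (0 < i < m)%N -> gp d (c i.-1) (c i.+1) (c i) <= C) /\
  (forall i, (0 < i <= m)%N -> D <= d (c i.-1) (c i)).

Definition chain_shadow (R : realType) (X : Type) (d : X -> X -> R) (delta : R)
  (x y : X) (C : R) (z : X) : Prop :=
  exists (c : nat -> X) (m : nat),
    [/\ (0 < m)%N, c 0%N = x, c m = z,
        is_chain d C (2 * C + 2 * delta + 1) c m
      & gp d (c 0%N) (c 1%N) y <= C].

(** (eps, C, D)-Schottky set: the finite set { S i | i : I } (S injective),
    with Sinv i the inverse isometry of S i. *)
Definition schottky (R : realType) (X : Type) (d : X -> X -> R) (o : X)
  (I : finType) (S Sinv : I -> X -> X) (eps C D : R) : Prop :=
  [/\ (forall x y, (1 - eps) * #|I|%:R <= #|[pred i | gp d x (S i y) o <= C]|%:R),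
      (forall x y, (1 - eps) * #|I|%:R <= #|[pred i | gp d x (Sinv i y) o <= C]|%:R)
    & (forall i, D <= d o (S i o))].

(** pre k = u_0 s_1 u_1 ... s_k u_k, with s_j = a_j b_j. *)
Fixpoint pre (X : Type) (I : Type) (S : I -> X -> X) (a b : nat -> I)
  (u : nat -> X -> X) (k : nat) : X -> X :=
  match k with
  | 0 => u 0%N
  | k'.+1 => fun x => pre S a b u k' (S (a k) (S (b k) (u k x)))
  end.

(** y_n^- , y_n , y_n^+  (meaningful for n >= 1). *)
Definition ym X I (S : I -> X -> X) a b u (o : X) (n : nat) : X :=
  pre S a b u n.-1 o.
Definition yy X I (S : I -> X -> X) a b u (o : X) (n : nat) : X :=
  pre S a b u n.-1 (S (a n) o).
Definition yp X I (S : I -> X -> X) a b u (o : X) (n : nat) : X :=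
  pre S a b u n.-1 (S (a n) (S (b n) o)).

Fixpoint piv (R : realType) (X : Type) (d : X -> X -> R) (delta C0 : R) (o : X)
  (I : Type) (S : I -> X -> X) (a b : nat -> I) (u : nat -> X -> X) (n : nat)
  : seq nat :=
  match n with
  | 0 => [::]
  | n'.+1 =>
    let P := piv d delta C0 o S a b u n' in
    let k := foldr maxn 0%N P in
    let yk := if k == 0%N then o else yy S a b u o k in
    if [&& gp d yk (yy S a b u o n) (ym S a b u o n) <= C0,
           gp d (ym S a b u o n) (yp S a b u o n) (yy S a b u o n) <= C0
         & gp d (yy S a b u o n) (ym S a b u o n.+1) (yp S a b u o n) <= C0]
    then rcons P n
    else
      let cand := [seq m <- P |
        `[< chain_shadow d delta (yy S a b u o m) (yp S a b u o m) (C0 + delta)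
                         (ym S a b u o n.+1) >]] in
      let m := foldr maxn 0%N cand in
      [seq j <- P | (0 < j <= m)%N]
  end.

From HB Require Import structures.
From mathcomp Require Import all_boot all_order all_algebra.
From mathcomp Require Import boolp reals.
From mathcomp Require Import lra zify.
Import Order.TTheory GRing.Theory Num.Theory.
Local Open Scope ring_scope.
Set Implicit Arguments.
Unset Strict Implicit.

(* The pivotal times are tied together by chains of local geodesics.  By
   induction on [n], for all pivotal times k < k' in P_n some
   (C0 + delta)-chain in the chain shadow of y_k seen from y_k^+ ends with the
   edge y_{k'}^-, y_{k'}, and y_{n+1}^- lies in the chain shadow of y_K for the
   largest K in P_n: a new pivotal time extends these chains by the long edge
   y_n^-, y_n, and backtracking only forgets pivotal times.  Chains glue across
   a long edge because the four-point condition turns a small angle at the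
   junction into a small angle again.  Finally, a chain in the shadow of y_k
   seen from y_k^+ makes a small angle with y_k^- at y_k and moves far away
   from y_k, which gives the 3-chain y_k^-, y_k, y_{n+1}^-. *)

Lemma foldr_maxn_ge (s : seq nat) x : x \in s -> (x <= foldr maxn 0 s)%N.
Proof.
elim: s => //= y s IH; rewrite inE => /predU1P[->|/IH x_le].
  exact: leq_maxl.
exact: leq_trans x_le (leq_maxr _ _).
Qed.

Lemma foldr_maxn_mem (s : seq nat) : (0 < foldr maxn 0 s)%N -> foldr maxn 0 s \in s.
Proof.
elim: s => //= y s IH; rewrite inE.
case: (leqP y (foldr maxn 0 s)) => [_ /IH fs|_]; last by rewrite eqxx.
by rewrite fs orbT.
Qed.

Lemma foldr_maxnE (s : seq nat) m :
  m \in s -> {in s, forall x, x <= m}%N -> foldr maxn 0 s = m.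
Proof.
move=> ms le_m; apply/eqP; rewrite eqn_leq foldr_maxn_ge // andbT.
elim: s {ms} le_m => //= y s IH le_m.
by rewrite geq_max le_m ?mem_head // IH // => x xs; rewrite le_m // inE xs orbT.
Qed.

Section Hyperbolic.

Variables (R : realType) (X : Type) (d : X -> X -> R) (delta : R).
Hypothesis metric_d : metric d.
Hypothesis hyperbolic_d : hyperbolic d delta.

Lemma dist_sym x y : d x y = d y x.
Proof. by case: metric_d. Qed.

Lemma gpC x y z : gp d x y z = gp d y x z.
Proof. by rewrite /gp (dist_sym x y) (dist_sym x z) (dist_sym z y); lra. Qed.

Lemma dist_sub_gp x y z : d x z - gp d x y z <= d x y.
Proof.
case: metric_d => _ _ triangle _; have := triangle x y z.
by rewrite /gp (dist_sym y z); lra.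
Qed.

Lemma gp_sum x y w : gp d w y x + gp d x w y = d x y.
Proof. by rewrite /gp (dist_sym w x) (dist_sym y w); lra. Qed.

Lemma delta_ge0 : 0 <= delta.
Proof. by case: hyperbolic_d. Qed.

Lemma gp_le_hyp x y z w K :
  gp d x z w <= K -> K + delta < gp d y z w -> gp d x y w <= K + delta.
Proof.
move=> xz yz; case: hyperbolic_d => _ /(_ x y z w) four_point.
rewrite leNgt; apply/negP => xy.
have : K + delta < Num.min (gp d x y w) (gp d y z w) by rewrite lt_min xy.
lra.
Qed.

Lemma is_chain_rev C Dd c m :
  is_chain d C Dd c m -> is_chain d C Dd (fun i => c (m - i)%N) m.
Proof.
move=> [angle edge]; split=> i i_bd.
  have := angle (m - i)%N ltac:(lia).
  have -> : (m - i.-1 = (m - i).+1)%N by lia.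
  have -> : (m - i.+1 = (m - i).-1)%N by lia.
  by rewrite gpC.
have := edge (m - i).+1 ltac:(lia).
have -> : (m - i.-1 = (m - i).+1)%N by lia.
by rewrite dist_sym.
Qed.

(* Backward induction on [j]: the long edge [c j, c j.+1] makes the angle at
   [c j] between [c j.+1] and [c m] large, so the four-point condition passes
   the small angle at [c j] on to the pair [c j.-1], [c m]. *)
Lemma chain_gp_end C Dd c m :
  2 * (C + delta) < Dd -> is_chain d C Dd c m ->
  forall j, (0 < j < m)%N -> gp d (c j.-1) (c m) (c j) <= C + delta.
Proof.
move=> long [angle edge].
suff end_gp k j : (0 < j)%N -> (j + k.+1 = m)%N ->
    gp d (c j.-1) (c m) (c j) <= C + delta.
  by move=> j /andP[j_gt0 j_lt]; apply: (end_gp (m - j.+1)%N) => //; lia.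
have d0 := delta_ge0.
elim: k j => [|k IH] j j_gt0 m_eq.
  have := angle j ltac:(lia); have -> : m = j.+1 by lia.
  lra.
have far := IH j.+1 isT ltac:(lia).
have sum := gp_sum (c j) (c j.+1) (c m).
have long_edge := edge j.+1 ltac:(lia).
apply: (gp_le_hyp (angle j ltac:(lia))).
rewrite /= in far long_edge; lra.
Qed.

Lemma chain_gp_start C Dd c m :
  2 * (C + delta) < Dd -> is_chain d C Dd c m -> (1 < m)%N ->
  gp d (c 0%N) (c m) (c m.-1) <= C + delta.
Proof.
move=> long ch m_gt1.
have := chain_gp_end long (is_chain_rev ch) (j := 1%N) ltac:(lia).
by rewrite subn0 subnn subn1 gpC.
Qed.

Lemma chain_dist_end C Dd c m :
  0 <= C -> 2 * (C + delta) < Dd -> is_chain d C Dd c m -> (0 < m)%N ->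
  d (c 0%N) (c 1%N) - (C + delta) <= d (c 0%N) (c m).
Proof.
move=> C_ge0 long ch m_gt0; have d0 := delta_ge0.
case: (ltnP 1 m) => [m_gt1|m_le1]; last first.
  have -> : m = 1%N by lia.
  lra.
have := chain_gp_end long ch (j := 1%N) ltac:(lia).
have := dist_sub_gp (c 0%N) (c m) (c 1%N).
rewrite /=; lra.
Qed.

Lemma chain_gp_snoc C Dd K c m z :
  2 * (C + delta) < Dd -> K + C + 2 * delta < Dd ->
  is_chain d C Dd c m -> (0 < m)%N ->
  gp d (c 0%N) z (c m) <= K -> gp d (c m.-1) z (c m) <= K + delta.
Proof.
move=> long longK ch m_gt0 start; have d0 := delta_ge0.
case: (ltnP 1 m) => [m_gt1|m_le1].
  have := chain_gp_start long ch m_gt1.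
  have := gp_sum (c m.-1) (c m) (c 0%N).
  have := ch.2 m ltac:(lia).
  move=> edge sum back; rewrite gpC; apply: (gp_le_hyp (z := c 0%N)).
    by rewrite gpC.
  lra.
have m1 : m = 1%N by lia.
by rewrite m1 /= in start *; lra.
Qed.

Definition chain_cat (c e : nat -> X) (m j : nat) : X :=
  if (j <= m)%N then c j else e (j - m)%N.

Lemma chain_cat_le c e m j : (j <= m)%N -> chain_cat c e m j = c j.
Proof. by rewrite /chain_cat => ->. Qed.

Lemma chain_cat_ge c e m j :
  c m = e 0%N -> (m <= j)%N -> chain_cat c e m j = e (j - m)%N.
Proof.
rewrite /chain_cat => ce m_le; case: leqP => // j_le.
have -> : j = m by lia.
by rewrite subnn.
Qed.

Lemma chain_cat_shift c e m j : c m = e 0%N -> chain_cat c e m (m + j) = e j.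
Proof. by move=> ce; rewrite chain_cat_ge ?addKn ?leq_addr. Qed.

Lemma is_chain_cat C Dd c e m l :
  is_chain d C Dd c m -> is_chain d C Dd e l -> c m = e 0%N ->
  (0 < m)%N -> (0 < l)%N -> gp d (c m.-1) (e 1%N) (c m) <= C ->
  is_chain d C Dd (chain_cat c e m) (m + l).
Proof.
move=> [angle_c edge_c] [angle_e edge_e] ce m_gt0 l_gt0 joint.
have catL j : (j <= m)%N -> chain_cat c e m j = c j := @chain_cat_le c e m j.
have catR j : (m <= j)%N -> chain_cat c e m j = e (j - m)%N := @chain_cat_ge c e m j ce.
split=> i i_bd.
  case: (ltngtP i m) => [i_lt|i_gt|->].
  - by rewrite !catL; [apply: angle_c; lia | lia..].
  - rewrite !catR; try lia.
    have -> : (i.-1 - m = (i - m).-1)%N by lia.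
    have -> : (i.+1 - m = (i - m).+1)%N by lia.
    by apply: angle_e; lia.
  - by rewrite (catL m.-1) ?leq_pred // (catL m) // catR // subSnn.
case: (leqP i m) => [i_le|i_gt].
  by rewrite !catL; [apply: edge_c; lia | lia..].
rewrite (catR i) ?(ltnW i_gt) //.
case: (ltnP m i.-1) => [pred_gt|pred_le].
  rewrite catR; last exact: ltnW.
  have -> : (i.-1 - m = (i - m).-1)%N by lia.
  by apply: edge_e; lia.
have -> : i.-1 = m by lia.
have -> : (i - m = 1)%N by lia.
by rewrite catL // ce; apply: (edge_e 1%N); lia.
Qed.

Lemma is_chain_edge C Dd x y :
  Dd <= d x y -> is_chain d C Dd (fun j => if j == 0%N then x else y) 1.
Proof. by move=> xy; split=> [i|i i_bd]; [lia | have -> : i = 1%N by lia]. Qed.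

Lemma is_chain3 C Dd e x y z :
  gp d x z y <= C -> Dd <= d x y -> Dd <= d y z ->
  is_chain d C Dd (fun j => nth e [:: x; y; z] j) 2.
Proof.
move=> xzy xy yz; split=> [i i_bd|[|[|[|i]]] //].
by have -> : i = 1%N by lia.
Qed.

Definition shadow_chain (C : R) (x y : X) (c : nat -> X) (m : nat) : Prop :=
  [/\ (0 < m)%N, c 0%N = x, is_chain d C (2 * C + 2 * delta + 1) c m
    & gp d (c 0%N) (c 1%N) y <= C].

Lemma chain_shadowP C x y z :
  chain_shadow d delta x y C z <-> exists c m, shadow_chain C x y c m /\ c m = z.
Proof.
split=> [[c [m [m_gt0 c0 cm ch dir]]]|[c [m [[m_gt0 c0 ch dir] cm]]]];
  by exists c, m.
Qed.

Definition shadow_edge (C : R) (x y A B : X) : Prop :=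
  exists c m, shadow_chain C x y c m /\ c m.-1 = A /\ c m = B.

Lemma shadow_edge_snoc C0 x y w z :
  chain_shadow d delta x y (C0 + delta) w -> gp d x z w <= C0 ->
  2 * (C0 + delta) + 2 * delta + 1 <= d w z ->
  shadow_edge (C0 + delta) x y w z.
Proof.
move=> /chain_shadowP[c [m [[m_gt0 c0 ch dir] cm]]] xzw wz; have d0 := delta_ge0.
have turn : gp d (c m.-1) z (c m) <= C0 + delta.
  by apply: (chain_gp_snoc _ _ ch) => //; rewrite ?c0 ?cm //; lra.
set e := fun j => if j == 0%N then w else z.
exists (chain_cat c e m), (m + 1)%N.
have ce : c m = e 0%N by [].
split; [split|split].
- by rewrite addn1.
- by rewrite chain_cat_le.
- exact: is_chain_cat ch (is_chain_edge _ wz) ce m_gt0 isT turn.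
- by rewrite !chain_cat_le.
- by rewrite addn1 /= chain_cat_le.
- exact: chain_cat_shift.
Qed.

Section Shadows.

Variables (C0 Dl : R).
Hypothesis long_Dl : 2 * (C0 + delta) < Dl.

Lemma gp_extend_edge A B Cc w :
  gp d A Cc B <= C0 -> Dl <= d B Cc -> gp d B w Cc <= C0 + delta ->
  gp d A w B <= C0 + delta /\ Dl - (C0 + delta) <= d B w.
Proof.
move=> ACB BC Bw; have long := long_Dl.
have far := dist_sub_gp B w Cc.
have sum := gp_sum B Cc w.
split; last lra.
by apply: (gp_le_hyp ACB); lra.
Qed.

Lemma shadow_chain_cat x y A B Cc p M q L :
  shadow_chain (C0 + delta) x y p M -> shadow_chain (C0 + delta) B Cc q L ->
  p M.-1 = A -> p M = B -> gp d A Cc B <= C0 -> Dl <= d B Cc ->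
  shadow_chain (C0 + delta) x y (chain_cat p q M) (M + L).
Proof.
move=> [M_gt0 p0 p_ch p_dir] [L_gt0 q0 q_ch q_dir] pA pB ACB BC.
rewrite q0 in q_dir; have [turn _] := gp_extend_edge ACB BC q_dir.
split.
- by rewrite addn_gt0 M_gt0.
- by rewrite chain_cat_le.
- by apply: is_chain_cat => //; rewrite ?pA ?pB.
- by rewrite !chain_cat_le.
Qed.

Lemma shadow_edge_trans x y A B Cc A' B' :
  shadow_edge (C0 + delta) x y A B -> shadow_edge (C0 + delta) B Cc A' B' ->
  gp d A Cc B <= C0 -> Dl <= d B Cc -> shadow_edge (C0 + delta) x y A' B'.
Proof.
move=> [p [M [p_sh [pA pB]]]] [q [L [q_sh [qA qB]]]] ACB BC.
have [L_gt0 q0 _ _] := q_sh.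
have pq : p M = q 0%N by rewrite pB q0.
exists (chain_cat p q M), (M + L)%N; split; first exact: shadow_chain_cat q_sh pA pB ACB BC.
have -> : ((M + L).-1 = M + L.-1)%N by lia.
by rewrite !chain_cat_shift.
Qed.

Lemma shadow_edge_shadow x y A B Cc z :
  shadow_edge (C0 + delta) x y A B -> chain_shadow d delta B Cc (C0 + delta) z ->
  gp d A Cc B <= C0 -> Dl <= d B Cc -> chain_shadow d delta x y (C0 + delta) z.
Proof.
move=> [p [M [p_sh [pA pB]]]] /chain_shadowP[q [L [q_sh qz]]] ACB BC.
have [_ q0 _ _] := q_sh.
apply/chain_shadowP; exists (chain_cat p q M), (M + L)%N; split.
  exact: shadow_chain_cat q_sh pA pB ACB BC.
by rewrite chain_cat_shift // pB q0.
Qed.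

Lemma shadow_gp_dist A B Cc z :
  0 <= C0 -> chain_shadow d delta B Cc (C0 + delta) z ->
  gp d A Cc B <= C0 -> 2 * (C0 + delta) + 2 * delta + 1 <= d A B -> Dl <= d B Cc ->
  gp d A z B <= C0 + 2 * delta /\ Dl - (2 * C0 + 3 * delta) <= d B z.
Proof.
move=> C0_ge0 /chain_shadowP[w [M [[M_gt0 w0 w_ch w_dir] wz]]] ACB AB BC.
have d0 := delta_ge0.
rewrite w0 in w_dir.
have [turn far] := gp_extend_edge ACB BC w_dir.
have long : 2 * (C0 + delta + delta) < 2 * (C0 + delta) + 2 * delta + 1 by lra.
have ch := is_chain_cat (is_chain_edge _ AB) w_ch (esym w0) isT M_gt0 turn.
have := chain_gp_end long ch (j := 1%N) ltac:(lia).
rewrite chain_cat_shift ?w0 //= wz => gp_AzB.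
have := chain_dist_end _ long w_ch M_gt0.
rewrite w0 wz; lra.
Qed.

End Shadows.

Section Pivots.

Variables (C0 D : R) (o : X) (I : Type) (S : I -> X -> X) (a b : nat -> I)
  (u : nat -> X -> X).
Hypothesis C0_ge0 : 0 <= C0.
Hypothesis long_D : 3 * C0 + 4 * delta + 1 <= D.
Hypothesis long_ym_yy : forall k, D <= d (ym S a b u o k) (yy S a b u o k).
Hypothesis long_yy_yp : forall k, D <= d (yy S a b u o k) (yp S a b u o k).

Local Notation y_ := (yy S a b u o).
Local Notation ym_ := (ym S a b u o).
Local Notation yp_ := (yp S a b u o).

Lemma long_D_gp : 2 * (C0 + delta) < D.
Proof. by move: delta_ge0 C0_ge0 long_D; lra. Qed.

Definition pivot_inv (n : nat) (P : seq nat) : Prop :=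
  [/\ {in P, forall k, 0 < k <= n}%N,
      {in P &, forall k k', (k < k')%N ->
        shadow_edge (C0 + delta) (y_ k) (yp_ k) (ym_ k') (y_ k')},
      (0 < foldr maxn 0 P)%N ->
        chain_shadow d delta (y_ (foldr maxn 0 P)) (yp_ (foldr maxn 0 P))
          (C0 + delta) (ym_ n.+1)
    & {in P, forall k, gp d (ym_ k) (yp_ k) (y_ k) <= C0}].

Lemma pivot_inv_shadow n P k :
  pivot_inv n P -> k \in P -> chain_shadow d delta (y_ k) (yp_ k) (C0 + delta) (ym_ n.+1).
Proof.
move=> [inP edges shadow turns] kP.
have k_le := foldr_maxn_ge kP.
have max_gt0 : (0 < foldr maxn 0 P)%N by have := inP k kP; lia.
have maxP := foldr_maxn_mem max_gt0.
case: (ltngtP k (foldr maxn 0 P)) => [k_lt|k_gt|->]; [|by rewrite ltnNge k_le in k_gt|exact: shadow].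
apply: (shadow_edge_shadow long_D_gp (edges k _ kP maxP k_lt) (shadow max_gt0)).
  exact: turns.
exact: long_yy_yp.
Qed.

Lemma pivot_inv_push n P :
  pivot_inv n P ->
  gp d (if foldr maxn 0 P == 0%N then o else y_ (foldr maxn 0 P)) (y_ n.+1) (ym_ n.+1)
    <= C0 ->
  gp d (ym_ n.+1) (yp_ n.+1) (y_ n.+1) <= C0 ->
  gp d (y_ n.+1) (ym_ n.+2) (yp_ n.+1) <= C0 ->
  pivot_inv n.+1 (rcons P n.+1).
Proof.
move=> [inP edges shadow turns] turn_in turn_at turn_out.
move: delta_ge0 C0_ge0 long_D => d0 C0_pos longD.
set K := foldr maxn 0 P in turn_in shadow.
have maxE : foldr maxn 0 (rcons P n.+1) = n.+1.
  apply: foldr_maxnE; first by rewrite mem_rcons mem_head.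
  by move=> x; rewrite mem_rcons inE => /predU1P[->|/inP]; lia.
have edge_new k : k \in P -> shadow_edge (C0 + delta) (y_ k) (yp_ k) (ym_ n.+1) (y_ n.+1).
  move=> kP; have k_le : (k <= K)%N := foldr_maxn_ge kP.
  have K_gt0 : (0 < K)%N by have := inP k kP; lia.
  have KP : K \in P := foldr_maxn_mem K_gt0.
  have edgeK : shadow_edge (C0 + delta) (y_ K) (yp_ K) (ym_ n.+1) (y_ n.+1).
    apply: shadow_edge_snoc (shadow K_gt0) _ _.
      by move: turn_in; rewrite eqn0Ngt K_gt0.
    by have := long_ym_yy n.+1; lra.
  case: (ltngtP k K) => [k_lt|k_gt|->//]; last by rewrite ltnNge k_le in k_gt.
  apply: (shadow_edge_trans long_D_gp (edges k K kP KP k_lt) edgeK); first exact: turns.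
  exact: long_yy_yp.
split.
- by move=> k; rewrite mem_rcons inE => /predU1P[->|/inP]; lia.
- move=> k k'; rewrite !mem_rcons !inE.
  case/predU1P=> [->|kP]; case/predU1P=> [->|k'P] kk'; try lia.
  + by have := inP k' k'P; lia.
  + exact: edge_new.
  + exact: edges.
- rewrite maxE => _.
  exists (fun j => if j == 0%N then y_ n.+1 else ym_ n.+2), 1%N; split=> //.
    apply: is_chain_edge.
    have := dist_sub_gp (y_ n.+1) (ym_ n.+2) (yp_ n.+1).
    by have := long_yy_yp n.+1; lra.
  by rewrite /=; lra.
- by move=> k; rewrite mem_rcons inE => /predU1P[->|/turns].
Qed.

Lemma pivot_inv_backtrack n P m :
  pivot_inv n P ->
  ((0 < m)%N -> m \in P /\ chain_shadow d delta (y_ m) (yp_ m) (C0 + delta) (ym_ n.+2)) ->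
  pivot_inv n.+1 [seq j <- P | (0 < j <= m)%N].
Proof.
move=> [inP edges _ turns] top.
have sub j : j \in [seq j <- P | (0 < j <= m)%N] -> j \in P /\ (0 < j <= m)%N.
  by rewrite mem_filter => /andP[].
split.
- by move=> k /sub[/inP]; lia.
- by move=> k k' /sub[kP _] /sub[k'P _]; apply: edges.
- move=> max_gt0.
  have m_gt0 : (0 < m)%N by have [_] := sub _ (foldr_maxn_mem max_gt0); lia.
  have [mP sh] := top m_gt0.
  rewrite (@foldr_maxnE _ m) //; first by rewrite mem_filter mP m_gt0 leqnn.
  by move=> x /sub[_ /andP[]].
- by move=> k /sub[/turns].
Qed.

Lemma pivot_inv_piv n : pivot_inv n (piv d delta C0 o S a b u n).
Proof.
elim: n => [|n IH]; first by split.
cbn [piv]; case: ifP => [/and3P[turn_in turn_at turn_out]|_].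
  exact: pivot_inv_push.
apply: pivot_inv_backtrack IH _ => max_gt0.
have := foldr_maxn_mem max_gt0; rewrite mem_filter => /andP[/asboolP sh mP].
by split.
Qed.

End Pivots.

End Hyperbolic.

Lemma dist_pre (R : realType) (X : Type) (d : X -> X -> R) (I : Type)
  (S : I -> X -> X) (a b : nat -> I) (u : nat -> X -> X) :
  (forall i, is_isom d (S i)) -> (forall k, is_isom d (u k)) ->
  forall k x y, d (pre S a b u k x) (pre S a b u k y) = d x y.
Proof.
move=> isoS iso_u; elim=> [|k IH] x y /=; first by case: (iso_u 0%N).
by rewrite IH (isoS _).1 (isoS _).1 (iso_u _).1.
Qed.

Unset Implicit Arguments.

Theorem lemma5p2 (R : realType) (X : Type) (d : X -> X -> R) (delta : R) (o : X)
  (I : finType) (S Sinv : I -> X -> X) (C0 D : R)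
  (u : nat -> X -> X) (a b : nat -> I) (n : nat) :
  metric d -> hyperbolic d delta ->
  (forall i, is_isom d (S i)) -> injective S ->
  (forall i, cancel (S i) (Sinv i) /\ cancel (Sinv i) (S i)) ->
  0 <= C0 ->
  schottky d o S Sinv (1 / 100) C0 D ->
  (forall k, is_isom d (u k)) ->
  6 * C0 + 13 * delta + 1 <= D ->
  forall k, k \in piv d delta C0 o S a b u n ->
  (exists2 k', k' \in piv d delta C0 o S a b u n & (k' < k)%N) ->
  is_chain d (2 * C0 + 5 * delta) (D - 6 * C0 - 13 * delta)
    (fun j => nth o [:: ym S a b u o k; yy S a b u o k; ym S a b u o n.+1] j) 2.
Proof.
(* Only the lower bound [D <= d o (s o)] of the Schottky property is used, and
   the conclusion holds at every pivotal time, the first one included. *)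
move=> metric_d hyp_d isoS _ _ C0_ge0 [_ _ longS] iso_u long_D k kP _.
have d0 := delta_ge0 hyp_d.
have long_ym_yy j : D <= d (ym S a b u o j) (yy S a b u o j).
  by rewrite /ym /yy (dist_pre a b isoS iso_u).
have long_yy_yp j : D <= d (yy S a b u o j) (yp S a b u o j).
  by rewrite /yy /yp (dist_pre a b isoS iso_u) (isoS _).1.
have long_D' : 3 * C0 + 4 * delta + 1 <= D by lra.
have inv := pivot_inv_piv metric_d hyp_d C0_ge0 long_D' long_ym_yy long_yy_yp n.
have [_ _ _ turns] := inv.
have long_D_gp : 2 * (C0 + delta) < D by lra.
have [gp_k dist_k] := shadow_gp_dist metric_d hyp_d long_D_gp C0_ge0
  (pivot_inv_shadow metric_d hyp_d C0_ge0 long_D' long_yy_yp inv kP) (turns k kP)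
  ltac:(have := long_ym_yy k; lra) (long_yy_yp k).
apply: is_chain3; [lra | have := long_ym_yy k; lra | lra].
Qed.
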